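(* Let $M$ be a timelike surface in $\mathbb{R}^{n,1}$ with a canonical null direction with respect to some constant vector $Z$. If the mean curvature vector $\vec H$ of $M$ is parallel in the normal bundle ($\nabla^\perp\vec H=0$), then $M$ is minimal, i.e. $\vec H=0$.
   Context: $\mathbb{R}^{n,1}$ is $\mathbb{R}^{n+1}$ with the metric $-dx_1^2+dx_2^2+\dots+dx_{n+1}^2$. A surface is timelike if the induced metric has signature $(1,1)$; a vector $v$ is lightlike if $v\ne0$ and $\langle v,v\rangle=0$. For a constant vector $Z$, $Z=Z^\top+Z^\perp$ along $M$ (tangent and normal parts); $M$ has a canonical null direction with respect to $Z$ if $Z^\top$ is lightlike everywhere on $M$. $\vec H=\frac12\operatorname{tr}II$ is the mean curvature vector and $\nabla^\perp$ the normal connection. *)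

From Stdlib Require Import Reals.
Open Scope R_scope.

(* Vectors of R^{n,1}: coordinates x_0, ..., x_n (indices > n are ignored);
   x_0 is the timelike coordinate. *)
Definition vec := nat -> R.

Definition eta (i : nat) : R := match i with O => -1 | _ => 1 end.

Definition ip (n : nat) (x y : vec) : R :=
  sum_f_R0 (fun i => eta i * x i * y i) n.

Definition lightlike (n : nat) (x : vec) : Prop :=
  (exists i, (i <= n)%nat /\ x i <> 0) /\ ip n x x = 0.

Definition vzero (n : nat) (x : vec) : Prop := forall i, (i <= n)%nat -> x i = 0.

(* Induced metric of a parametrized surface with tangent vectors a = f_u, b = f_v *)
Definition gE n (a b : vec) := ip n a a.
Definition gF n (a b : vec) := ip n a b.
Definition gG n (a b : vec) := ip n b b.
Definition gdet n (a b : vec) := gE n a b * gG n a b - gF n a b * gF n a b.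

(* Timelike: induced metric has signature (1,1), i.e. (for a 2x2 symmetric
   matrix) negative determinant. *)
Definition timelike_at n (a b : vec) : Prop := gdet n a b < 0.

(* Tangent part of X (orthogonal projection onto span(a,b) w.r.t. the
   nondegenerate induced metric), and normal part. *)
Definition tang n (a b X : vec) : vec := fun i =>
  let W := gdet n a b in
  let xa := ip n X a in let xb := ip n X b in
  ((gG n a b * xa - gF n a b * xb) / W) * a i
  + ((gE n a b * xb - gF n a b * xa) / W) * b i.

Definition norm_part n (a b X : vec) : vec := fun i => X i - tang n a b X i.

(* Mean curvature vector H = 1/2 tr_g II = 1/2 (g^{ij} f_ij)^perp *)
Definition meanH n (fu fv fuu fuv fvv : vec) : vec :=
  let W := gdet n fu fv in
  let L : vec := fun i =>
      (gG n fu fv / W) * fuu i - 2 * (gF n fu fv / W) * fuv i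
      + (gE n fu fv / W) * fvv i in
  fun i => / 2 * norm_part n fu fv L i.

Definition open2 (U : R -> R -> Prop) : Prop :=
  forall u v, U u v -> exists r, 0 < r /\
    forall u' v', Rabs (u' - u) < r -> Rabs (v' - v) < r -> U u' v'.

Definition cont2 (U : R -> R -> Prop) (g : R -> R -> R) : Prop :=
  forall u v, U u v -> forall eps, 0 < eps -> exists d, 0 < d /\
    forall u' v', U u' v' -> Rabs (u' - u) < d -> Rabs (v' - v) < d ->
      Rabs (g u' v' - g u v) < eps.

Fixpoint Ck (U : R -> R -> Prop) (k : nat) (g : R -> R -> R) : Prop :=
  match k with
  | O => cont2 U g
  | S k' => exists gu gv : R -> R -> R,
      (forall u v, U u v ->
         derivable_pt_lim (fun s => g s v) u (gu u v) /\
         derivable_pt_lim (fun t => g u t) v (gv u v)) /\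
      Ck U k' gu /\ Ck U k' gv
  end.

Definition smooth2 U g : Prop := forall k, Ck U k g.

Definition smooth_map n U (f : R -> R -> vec) : Prop :=
  forall i, (i <= n)%nat -> smooth2 U (fun u v => f u v i).

Definition pdu n (f : R -> R -> vec) (u v : R) (d : vec) : Prop :=
  forall i, (i <= n)%nat -> derivable_pt_lim (fun s => f s v i) u (d i).
Definition pdv n (f : R -> R -> vec) (u v : R) (d : vec) : Prop :=
  forall i, (i <= n)%nat -> derivable_pt_lim (fun t => f u t i) v (d i).

From Stdlib Require Import Reals Lra Lia.
From Coquelicot Require Import Coquelicot.
Open Scope R_scope.

(* Write Z = T + N with T = Z^top = al f_u + be f_v lightlike and N normal.  Differentiating
   <T,T> = 0 and <N,f_u> = <N,f_v> = 0 along the surface shows that the symmetric form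
   h_ij = <N,f_ij> has the null vector (al,be) in its kernel; a symmetric form with a null
   vector of the Lorentzian metric g in its kernel has zero g-trace, so <H,Z> = <H,N> = 0.
   Differentiating <H,Z> = <H,f_u> = <H,f_v> = 0, where the derivatives of H are tangent
   because H is parallel, the same argument applied to k_ij = <H,f_ij> gives <H,H> = 0.
   The normal plane of a timelike surface is spacelike, hence H = 0.  Smoothness is only
   needed for the symmetry f_uv = f_vu of the mixed partials. *)

(** * Symmetry of mixed partial derivatives *)

Lemma derivable_pt_lim_ext_loc (f g : R -> R) x l r : 0 < r ->
  (forall y, Rabs (y - x) < r -> f y = g y) ->
  derivable_pt_lim f x l -> derivable_pt_lim g x l.
Proof.
  intros hr hfg hf. apply is_derive_Reals. apply is_derive_Reals in hf.
  apply (is_derive_ext_loc f g x l); [| exact hf].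
  exists (mkposreal r hr). intros y hy. exact (hfg y hy).
Qed.

Lemma derivable_pt_lim_loc_zero (f : R -> R) x l r : 0 < r ->
  (forall y, Rabs (y - x) < r -> f y = 0) ->
  derivable_pt_lim f x l -> l = 0.
Proof.
  intros hr hf hd. apply (uniqueness_limite (fun _ => 0) x).
  - exact (derivable_pt_lim_ext_loc f _ x l r hr hf hd).
  - apply derivable_pt_lim_const.
Qed.

Lemma open2_slice_u U u v : open2 U -> U u v ->
  exists r, 0 < r /\ forall s, Rabs (s - u) < r -> U s v.
Proof.
  intros hU huv. destruct (hU u v huv) as [r [hr hball]].
  exists r. split; [exact hr|]. intros s hs. apply hball; [exact hs|].
  rewrite Rminus_diag, Rabs_R0. exact hr.
Qed.

Lemma open2_slice_v U u v : open2 U -> U u v ->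
  exists r, 0 < r /\ forall t, Rabs (t - v) < r -> U u t.
Proof.
  intros hU huv. destruct (hU u v huv) as [r [hr hball]].
  exists r. split; [exact hr|]. intros t ht. apply hball; [|exact ht].
  rewrite Rminus_diag, Rabs_R0. exact hr.
Qed.

Lemma is_derive_Derive_inner (k : R -> R -> R) (dk : R -> R) x y d r : 0 < r ->
  (forall z, Rabs (z - x) < r -> is_derive (fun t => k z t) y (dk z)) ->
  is_derive dk x d -> is_derive (fun z => Derive (fun t => k z t) y) x d.
Proof.
  intros hr hk hd. apply (is_derive_ext_loc dk); [| exact hd].
  exists (mkposreal r hr). intros z hz. symmetry. exact (is_derive_unique _ _ _ (hk z hz)).
Qed.

Lemma cont2_continuity_2d_pt U (F G : R -> R -> R) x y r : 0 < r ->
  (forall u v, Rabs (u - x) < r -> Rabs (v - y) < r -> U u v /\ F u v = G u v) ->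
  cont2 U G -> continuity_2d_pt F x y.
Proof.
  intros hr hsq hG eps.
  assert (hxy : U x y /\ F x y = G x y)
    by (apply hsq; rewrite Rminus_diag, Rabs_R0; exact hr).
  destruct hxy as [hxy eqxy].
  destruct (hG x y hxy eps (cond_pos eps)) as [d [hd hcont]].
  exists (mkposreal _ (Rmin_pos d r hd hr)). simpl. intros u v hu hv.
  pose proof (Rlt_le_trans _ _ _ hu (Rmin_r d r)) as hu'.
  pose proof (Rlt_le_trans _ _ _ hv (Rmin_r d r)) as hv'.
  destruct (hsq u v hu' hv') as [huv ->]. rewrite eqxy.
  apply hcont; [exact huv | exact (Rlt_le_trans _ _ _ hu (Rmin_l d r))
                          | exact (Rlt_le_trans _ _ _ hv (Rmin_l d r))].
Qed.

Section MixedPartials.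

Variables (U : R -> R -> Prop) (g gu gv guv gvu : R -> R -> R).
Hypotheses (hU : open2 U)
  (hgu : forall u v, U u v -> derivable_pt_lim (fun s => g s v) u (gu u v))
  (hgv : forall u v, U u v -> derivable_pt_lim (fun t => g u t) v (gv u v))
  (hguv : forall u v, U u v -> derivable_pt_lim (fun t => gu u t) v (guv u v))
  (hgvu : forall u v, U u v -> derivable_pt_lim (fun s => gv s v) u (gvu u v))
  (cguv : cont2 U guv) (cgvu : cont2 U gvu).

Lemma mixed_partials_eq u0 v0 : U u0 v0 -> gvu u0 v0 = guv u0 v0.
Proof.
  intros h0. destruct (hU u0 v0 h0) as [r [hr hball]].
  assert (hr2 : 0 < r / 2) by lra.
  assert (half : forall a b c, Rabs (a - b) < r / 2 -> Rabs (b - c) < r / 2 -> Rabs (a - c) < r).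
  { intros a b c hab hbc. replace (a - c) with ((a - b) + (b - c)) by ring.
    eapply Rle_lt_trans; [apply Rabs_triang | lra]. }
  assert (hzero : forall a, Rabs (a - a) < r / 2) by (intros; rewrite Rminus_diag, Rabs_R0; lra).
  assert (d_vu : forall u v, Rabs (u - u0) < r / 2 -> Rabs (v - v0) < r / 2 ->
      is_derive (fun z => Derive (fun t => g z t) v) u (gvu u v)).
  { intros u v hu hv. apply (is_derive_Derive_inner g (fun z => gv z v) _ _ _ (r / 2) hr2).
    - intros z hz. apply is_derive_Reals, hgv, hball; [apply (half z u u0) | lra]; assumption.
    - apply is_derive_Reals, hgvu, hball; lra. }
  assert (d_uv : forall u v, Rabs (u - u0) < r / 2 -> Rabs (v - v0) < r / 2 ->
      is_derive (fun z => Derive (fun t => g t z) u) v (guv u v)).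
  { intros u v hu hv.
    apply (is_derive_Derive_inner (fun z t => g t z) (fun z => gu u z) _ _ _ (r / 2) hr2).
    - intros z hz. apply is_derive_Reals, hgu, hball; [lra | apply (half z v v0)]; assumption.
    - apply is_derive_Reals, hguv, hball; lra. }
  rewrite <- (is_derive_unique _ _ _ (d_vu u0 v0 (hzero u0) (hzero v0))),
          <- (is_derive_unique _ _ _ (d_uv u0 v0 (hzero u0) (hzero v0))).
  apply Schwarz.
  - exists (mkposreal _ hr2). simpl. intros u v hu hv.
    assert (huv : U u v) by (apply hball; lra).
    split; [|split; [|split]].
    + exists (gu u v). apply is_derive_Reals, hgu, huv.
    + exists (gv u v). apply is_derive_Reals, hgv, huv.
    + exists (gvu u v). exact (d_vu u v hu hv).
    + exists (guv u v). exact (d_uv u v hu hv).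
  - apply (cont2_continuity_2d_pt U _ gvu _ _ (r / 2) hr2); [| exact cgvu].
    intros u v hu hv. split.
    + apply hball; lra.
    + exact (is_derive_unique _ _ _ (d_vu u v hu hv)).
  - apply (cont2_continuity_2d_pt U _ guv _ _ (r / 2) hr2); [| exact cguv].
    intros u v hu hv. split.
    + apply hball; lra.
    + exact (is_derive_unique _ _ _ (d_uv u v hu hv)).
Qed.

End MixedPartials.

Lemma smooth2_mixed_partials U (g Gu Gv : R -> R -> R) u0 v0 m :
  open2 U -> smooth2 U g -> U u0 v0 ->
  (forall u v, U u v -> derivable_pt_lim (fun s => g s v) u (Gu u v)) ->
  (forall u v, U u v -> derivable_pt_lim (fun t => g u t) v (Gv u v)) ->
  derivable_pt_lim (fun t => Gu u0 t) v0 m ->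
  derivable_pt_lim (fun s => Gv s v0) u0 m.
Proof.
  intros hU hg h0 hGu hGv hm.
  destruct (hg 2%nat) as [gu [gv [hd [[guu [guv [hdu [_ cguv]]]] [gvu [gvv [hdv [cgvu _]]]]]]]].
  assert (eq_u : forall u v, U u v -> Gu u v = gu u v).
  { intros u v huv. eapply uniqueness_limite; [apply hGu, huv | apply (hd u v huv)]. }
  assert (eq_v : forall u v, U u v -> Gv u v = gv u v).
  { intros u v huv. eapply uniqueness_limite; [apply hGv, huv | apply (hd u v huv)]. }
  destruct (open2_slice_u U u0 v0 hU h0) as [ru [hru hslu]].
  destruct (open2_slice_v U u0 v0 hU h0) as [rv [hrv hslv]].
  assert (hm_eq : m = guv u0 v0).
  { eapply uniqueness_limite; [exact hm |].
    apply (derivable_pt_lim_ext_loc (fun t => gu u0 t) _ v0 _ rv hrv).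
    - intros t ht. symmetry. apply eq_u, hslv, ht.
    - apply (hdu u0 v0 h0). }
  rewrite hm_eq, <- (mixed_partials_eq U g gu gv guv gvu hU); try assumption.
  - apply (derivable_pt_lim_ext_loc (fun s => gv s v0) _ u0 _ ru hru).
    + intros s hs. symmetry. apply eq_v, hslu, hs.
    + apply (hdv u0 v0 h0).
  - intros u v huv. apply (hd u v huv).
  - intros u v huv. apply (hd u v huv).
  - intros u v huv. apply (hdu u v huv).
  - intros u v huv. apply (hdv u v huv).
Qed.

(** * The Minkowski inner product *)

Definition is_vderiv n (X : R -> vec) s (dX : vec) : Prop :=
  forall i, (i <= n)%nat -> derivable_pt_lim (fun t => X t i) s (dX i).

Lemma ip_ext n x y x' y' : (forall i, (i <= n)%nat -> x i = x' i) ->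
  (forall i, (i <= n)%nat -> y i = y' i) -> ip n x y = ip n x' y'.
Proof.
  intros hx hy. unfold ip. induction n; simpl.
  - rewrite hx, hy; auto.
  - rewrite IHn, hx, hy; auto.
Qed.

Lemma ip_sym n x y : ip n x y = ip n y x.
Proof. unfold ip. induction n; simpl; [ring | rewrite IHn; ring]. Qed.

Lemma ip_lin_l n c d x w y :
  ip n (fun i => c * x i + d * w i) y = c * ip n x y + d * ip n w y.
Proof. unfold ip. induction n; simpl; [ring | rewrite IHn; ring]. Qed.

Lemma ip_lin_r n c d x w y :
  ip n y (fun i => c * x i + d * w i) = c * ip n y x + d * ip n y w.
Proof. rewrite ip_sym, ip_lin_l, (ip_sym n x), (ip_sym n w). ring. Qed.

Lemma ip_lin3_l n c1 c2 c3 x y w z :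
  ip n (fun i => c1 * x i - 2 * c2 * y i + c3 * w i) z
  = c1 * ip n x z - 2 * c2 * ip n y z + c3 * ip n w z.
Proof. unfold ip. induction n; simpl; [ring | rewrite IHn; ring]. Qed.

Lemma ip_scal_l n c x y : ip n (fun i => c * x i) y = c * ip n x y.
Proof. unfold ip. induction n; simpl; [ring | rewrite IHn; ring]. Qed.

Lemma ip_opp_l n x y : ip n (fun i => - x i) y = - ip n x y.
Proof. unfold ip. induction n; simpl; [ring | rewrite IHn; ring]. Qed.

Lemma ip_sub_l n x w y : ip n (fun i => x i - w i) y = ip n x y - ip n w y.
Proof. unfold ip. induction n; simpl; [ring | rewrite IHn; ring]. Qed.

Lemma ip_zero_r n x : ip n x (fun _ => 0) = 0.
Proof. unfold ip. induction n; simpl; [ring | rewrite IHn; ring]. Qed.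

Lemma ip_vderiv n (X Y : R -> vec) s dX dY :
  is_vderiv n X s dX -> is_vderiv n Y s dY ->
  derivable_pt_lim (fun t => ip n (X t) (Y t)) s (ip n dX (Y s) + ip n (X s) dY).
Proof.
  intros hX hY. induction n.
  - apply (derivable_pt_lim_ext (fun t => eta 0 * (X t 0%nat * Y t 0%nat)));
      [intros t; unfold ip; simpl; ring |].
    replace (ip 0 dX (Y s) + ip 0 (X s) dY)
      with (eta 0 * (dX 0%nat * Y s 0%nat + X s 0%nat * dY 0%nat)) by (unfold ip; simpl; ring).
    apply derivable_pt_lim_scal, (derivable_pt_lim_mult (fun t => X t 0%nat)); auto.
  - apply (derivable_pt_lim_ext
      (fun t => ip n (X t) (Y t) + eta (S n) * (X t (S n) * Y t (S n))));
      [intros t; unfold ip; simpl; ring |].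
    replace (ip (S n) dX (Y s) + ip (S n) (X s) dY)
      with ((ip n dX (Y s) + ip n (X s) dY)
            + eta (S n) * (dX (S n) * Y s (S n) + X s (S n) * dY (S n)))
      by (unfold ip; simpl; ring).
    apply (derivable_pt_lim_plus (fun t => ip n (X t) (Y t))).
    + apply IHn; intros i hi; [apply hX | apply hY]; lia.
    + apply derivable_pt_lim_scal, (derivable_pt_lim_mult (fun t => X t (S n))); auto.
Qed.

Lemma ip_vderiv_loc_zero n (X Y : R -> vec) s dX dY r : 0 < r ->
  (forall t, Rabs (t - s) < r -> ip n (X t) (Y t) = 0) ->
  is_vderiv n X s dX -> is_vderiv n Y s dY -> ip n dX (Y s) + ip n (X s) dY = 0.
Proof.
  intros hr hXY hX hY.
  exact (derivable_pt_lim_loc_zero _ s _ r hr hXY (ip_vderiv n X Y s dX dY hX hY)).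
Qed.

Lemma is_vderiv_const n (Z : vec) s : is_vderiv n (fun _ => Z) s (fun _ => 0).
Proof. intros i _. apply derivable_pt_lim_const. Qed.

Lemma ex_derive_ip n (X Y : R -> vec) s dX dY :
  is_vderiv n X s dX -> is_vderiv n Y s dY -> ex_derive (fun t => ip n (X t) (Y t)) s.
Proof. intros hX hY. eexists. apply is_derive_Reals, (ip_vderiv n X Y s dX dY hX hY). Qed.

Definition spatial_ip n (x y : vec) : R := ip n x y + x 0%nat * y 0%nat.

Lemma spatial_ip_ge0 n x : 0 <= spatial_ip n x x.
Proof.
  unfold spatial_ip, ip. induction n; simpl; [lra |].
  assert (0 <= x (S n) * x (S n)) by nra. lra.
Qed.

Lemma spatial_ip_eq0 n x : spatial_ip n x x = 0 -> forall i, (1 <= i <= n)%nat -> x i = 0.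
Proof.
  unfold spatial_ip, ip. induction n; simpl; intros hx i hi; [lia |].
  pose proof (spatial_ip_ge0 n x) as hpos. unfold spatial_ip, ip in hpos.
  assert (0 <= x (S n) * x (S n)) by nra.
  destruct (Nat.eq_dec i (S n)) as [-> | hne]; [nra |].
  apply IHn; [lra | lia].
Qed.

Lemma quadratic_ge0_discr A B C : 0 <= C ->
  (forall t, 0 <= A + 2 * t * B + t * t * C) -> B * B <= A * C.
Proof.
  intros hC hq. destruct (Req_dec C 0) as [hC0 | hC0].
  - destruct (Req_dec B 0) as [hB0 | hB0]; [subst; lra | exfalso].
    specialize (hq (- (A + 1) / (2 * B))).
    replace (A + 2 * (- (A + 1) / (2 * B)) * B + - (A + 1) / (2 * B) * (- (A + 1) / (2 * B)) * C)
      with (-1) in hq by (rewrite hC0; field; exact hB0). lra.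
  - specialize (hq (- B / C)).
    replace (A + 2 * (- B / C) * B + - B / C * (- B / C) * C) with ((A * C - B * B) / C) in hq
      by (field; exact hC0).
    apply Rmult_le_compat_r with (r := C) in hq; [| lra].
    unfold Rdiv in hq. rewrite Rmult_0_l, Rmult_assoc, Rinv_l, Rmult_1_r in hq; [lra | exact hC0].
Qed.

Lemma spatial_ip_cauchy_schwarz n x y :
  spatial_ip n x y * spatial_ip n x y <= spatial_ip n x x * spatial_ip n y y.
Proof.
  apply quadratic_ge0_discr; [apply spatial_ip_ge0 |]. intros t.
  pose proof (spatial_ip_ge0 n (fun i => 1 * x i + t * y i)) as hpos.
  unfold spatial_ip in *. rewrite ip_lin_l, !ip_lin_r, (ip_sym n y x) in hpos. nra.
Qed.

Lemma timelike_orth_null_eq0 n T N : ip n T T < 0 -> ip n N T = 0 -> ip n N N = 0 -> vzero n N.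
Proof.
  intros hT hNT hNN.
  pose proof (spatial_ip_cauchy_schwarz n N T) as hcs. unfold spatial_ip in hcs.
  rewrite hNT, hNN in hcs.
  assert (hsq : N 0%nat * N 0%nat * - ip n T T <= 0) by nra.
  assert (hN0 : N 0%nat = 0).
  { apply Rsqr_0_uniq. unfold Rsqr. pose proof (Rle_0_sqr (N 0%nat)) as h. unfold Rsqr in h. nra. }
  intros [| i] hi; [exact hN0 |].
  apply (spatial_ip_eq0 n N); [unfold spatial_ip; rewrite hNN, hN0; ring | lia].
Qed.

Lemma quad_form_indefinite E F G : E * G - F * F < 0 ->
  exists x y, x * x * E + 2 * x * y * F + y * y * G < 0.
Proof.
  intros hdet.
  destruct (Rlt_dec 0 E) as [hE | hE]; [exists F, (- E); nra |].
  destruct (Rlt_dec 0 G) as [hG | hG]; [exists G, (- F); nra |].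
  destruct (Rlt_dec E 0) as [hE' | hE']; [exists 1, 0; lra |].
  destruct (Rlt_dec G 0) as [hG' | hG']; [exists 0, 1; lra |].
  exists 1, (- F). nra.
Qed.

Lemma timelike_normal_null_eq0 n a b N : gdet n a b < 0 ->
  ip n N a = 0 -> ip n N b = 0 -> ip n N N = 0 -> vzero n N.
Proof.
  intros hdet ha hb hN. unfold gdet, gE, gF, gG in hdet.
  destruct (quad_form_indefinite _ _ _ hdet) as [x [y hxy]].
  apply (timelike_orth_null_eq0 n (fun i => x * a i + y * b i)); [| | exact hN].
  - rewrite ip_lin_l, !ip_lin_r, (ip_sym n b a). nra.
  - rewrite ip_lin_r, ha, hb. ring.
Qed.

(** * Projection onto a timelike tangent plane *)

Definition tang_ca n (a b X : vec) : R := (gG n a b * ip n X a - gF n a b * ip n X b) / gdet n a b.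
Definition tang_cb n (a b X : vec) : R := (gE n a b * ip n X b - gF n a b * ip n X a) / gdet n a b.

Lemma tang_ip_l n a b X Y :
  ip n (tang n a b X) Y = tang_ca n a b X * ip n a Y + tang_cb n a b X * ip n b Y.
Proof. apply ip_lin_l. Qed.

Lemma ip_tang_r n a b X Y :
  ip n Y (tang n a b X) = tang_ca n a b X * ip n Y a + tang_cb n a b X * ip n Y b.
Proof. rewrite ip_sym, tang_ip_l, (ip_sym n a), (ip_sym n b). reflexivity. Qed.

Lemma tang_ip_a n a b X : gdet n a b <> 0 -> ip n (tang n a b X) a = ip n X a.
Proof.
  intros hdet. rewrite tang_ip_l. unfold tang_ca, tang_cb, gdet, gE, gF, gG in *.
  rewrite (ip_sym n b a). field. exact hdet.
Qed.

Lemma tang_ip_b n a b X : gdet n a b <> 0 -> ip n (tang n a b X) b = ip n X b.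
Proof.
  intros hdet. rewrite tang_ip_l. unfold tang_ca, tang_cb, gdet, gE, gF, gG in *.
  field. exact hdet.
Qed.

Lemma tang_ip_sym n a b X Y : gdet n a b <> 0 -> ip n (tang n a b X) Y = ip n X (tang n a b Y).
Proof.
  intros hdet. rewrite tang_ip_l, ip_tang_r, (ip_sym n a Y), (ip_sym n b Y).
  unfold tang_ca, tang_cb, gdet, gE, gF, gG in *. field. exact hdet.
Qed.

Lemma norm_part_ip_a n a b X : gdet n a b <> 0 -> ip n (norm_part n a b X) a = 0.
Proof. intros hdet. unfold norm_part. rewrite ip_sub_l, tang_ip_a; [ring | exact hdet]. Qed.

Lemma norm_part_ip_b n a b X : gdet n a b <> 0 -> ip n (norm_part n a b X) b = 0.
Proof. intros hdet. unfold norm_part. rewrite ip_sub_l, tang_ip_b; [ring | exact hdet]. Qed.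

Lemma ip_normal_norm_part n a b X V : ip n V a = 0 -> ip n V b = 0 ->
  ip n V (norm_part n a b X) = ip n V X.
Proof.
  intros ha hb. unfold norm_part. rewrite ip_sym, ip_sub_l, tang_ip_l, (ip_sym n a), (ip_sym n b), ha, hb, (ip_sym n X).
  ring.
Qed.

Lemma tangent_ip n a b X Y : vzero n (norm_part n a b X) -> ip n X Y = ip n (tang n a b X) Y.
Proof.
  intros hX. apply ip_ext; [| reflexivity].
  intros i hi. specialize (hX i hi). unfold norm_part in hX. lra.
Qed.

Lemma lightlike_tang_coefs n a b Z : lightlike n (tang n a b Z) ->
  (tang_ca n a b Z <> 0 \/ tang_cb n a b Z <> 0) /\
  tang_ca n a b Z * tang_ca n a b Z * gE n a b + 2 * tang_ca n a b Z * tang_cb n a b Z * gF n a b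
  + tang_cb n a b Z * tang_cb n a b Z * gG n a b = 0.
Proof.
  intros [[i [hi hTi]] hnull]. split.
  - destruct (Req_dec (tang_ca n a b Z) 0) as [h1 | h1]; [| now left].
    destruct (Req_dec (tang_cb n a b Z) 0) as [h2 | h2]; [| now right].
    exfalso. apply hTi. unfold tang. cbv zeta. fold (tang_ca n a b Z) (tang_cb n a b Z).
    rewrite h1, h2. ring.
  - rewrite <- hnull, tang_ip_l, !ip_tang_r. unfold gE, gF, gG. rewrite (ip_sym n b a). ring.
Qed.

Lemma null_kernel_trace_eq0 E F G h11 h12 h22 al be :
  (al <> 0 \/ be <> 0) -> al * al * E + 2 * al * be * F + be * be * G = 0 ->
  al * h11 + be * h12 = 0 -> al * h12 + be * h22 = 0 ->
  G * h11 - 2 * F * h12 + E * h22 = 0.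
Proof.
  intros hne hnull r1 r2.
  assert (hal : al * al * (G * h11 - 2 * F * h12 + E * h22) = 0).
  { transitivity (h22 * (al * al * E + 2 * al * be * F + be * be * G)
      + G * (al * (al * h11 + be * h12) - be * (al * h12 + be * h22))
      - 2 * F * al * (al * h12 + be * h22)); [ring | rewrite hnull, r1, r2; ring]. }
  assert (hbe : be * be * (G * h11 - 2 * F * h12 + E * h22) = 0).
  { transitivity (h11 * (al * al * E + 2 * al * be * F + be * be * G)
      + E * (be * (al * h12 + be * h22) - al * (al * h11 + be * h12))
      - 2 * F * be * (al * h11 + be * h12)); [ring | rewrite hnull, r1, r2; ring]. }
  destruct hne as [hne | hne]; apply Rmult_integral in hal; apply Rmult_integral in hbe.
  - destruct hal as [hal | hal]; [apply Rmult_integral in hal; tauto | exact hal].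
  - destruct hbe as [hbe | hbe]; [apply Rmult_integral in hbe; tauto | exact hbe].
Qed.

Lemma meanH_ip_a n a b A B C : gdet n a b <> 0 -> ip n (meanH n a b A B C) a = 0.
Proof. intros hdet. unfold meanH. cbv zeta. rewrite ip_scal_l, norm_part_ip_a; [ring | exact hdet]. Qed.

Lemma meanH_ip_b n a b A B C : gdet n a b <> 0 -> ip n (meanH n a b A B C) b = 0.
Proof. intros hdet. unfold meanH. cbv zeta. rewrite ip_scal_l, norm_part_ip_b; [ring | exact hdet]. Qed.

Lemma meanH_ip_normal_eq0 n a b A B C Z V : gdet n a b < 0 -> lightlike n (tang n a b Z) ->
  ip n V a = 0 -> ip n V b = 0 ->
  tang_ca n a b Z * ip n V A + tang_cb n a b Z * ip n V B = 0 ->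
  tang_ca n a b Z * ip n V B + tang_cb n a b Z * ip n V C = 0 ->
  ip n (meanH n a b A B C) V = 0.
Proof.
  intros hdet hnull ha hb r1 r2.
  destruct (lightlike_tang_coefs n a b Z hnull) as [hne hnull'].
  pose proof (null_kernel_trace_eq0 _ _ _ _ _ _ _ _ hne hnull' r1 r2) as htr.
  unfold meanH. cbv zeta.
  rewrite ip_scal_l, ip_sym, ip_normal_norm_part, ip_sym, ip_lin3_l by assumption.
  rewrite (ip_sym n A), (ip_sym n B), (ip_sym n C).
  transitivity (/ 2 / gdet n a b * (gG n a b * ip n V A - 2 * gF n a b * ip n V B + gE n a b * ip n V C)).
  - field. lra.
  - rewrite htr. ring.
Qed.

(** * Differentiating along a surface with a null direction *)

Lemma ex_derive_Rplus (f g : R -> R) x : ex_derive f x -> ex_derive g x ->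
  ex_derive (fun t => f t + g t) x.
Proof. exact (ex_derive_plus f g x). Qed.

Lemma ex_derive_Rminus (f g : R -> R) x : ex_derive f x -> ex_derive g x ->
  ex_derive (fun t => f t - g t) x.
Proof. exact (ex_derive_minus f g x). Qed.

Lemma tang_vderiv n (a b : R -> vec) da db Z s :
  is_vderiv n a s da -> is_vderiv n b s db -> gdet n (a s) (b s) <> 0 ->
  exists dT, is_vderiv n (fun t => tang n (a t) (b t) Z) s dT.
Proof.
  intros ha hb hdet.
  exists (fun i => Derive (fun t => tang n (a t) (b t) Z i) s). intros i hi.
  apply is_derive_Reals, Derive_correct.
  pose proof (is_vderiv_const n Z s) as hZ.
  unfold tang, gdet, gE, gF, gG in *. cbv zeta.
  apply ex_derive_Rplus; apply ex_derive_mult;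
    try (eexists; apply is_derive_Reals; (apply ha || apply hb); exact hi).
  all: apply ex_derive_div; [| | exact hdet];
    apply ex_derive_Rminus; apply ex_derive_mult;
    first [ exact (ex_derive_ip n _ _ s _ _ ha ha) | exact (ex_derive_ip n _ _ s _ _ ha hb)
          | exact (ex_derive_ip n _ _ s _ _ hb hb) | exact (ex_derive_ip n _ _ s _ _ hZ ha)
          | exact (ex_derive_ip n _ _ s _ _ hZ hb) ].
Qed.

Lemma kernel_row n a b Z D V X Y :
  ip n D (tang n a b Z) = 0 -> ip n D a + ip n V X = 0 -> ip n D b + ip n V Y = 0 ->
  tang_ca n a b Z * ip n V X + tang_cb n a b Z * ip n V Y = 0.
Proof.
  intros hT hX hY. rewrite ip_tang_r in hT.
  replace (ip n V X) with (- ip n D a) by lra. replace (ip n V Y) with (- ip n D b) by lra.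
  lra.
Qed.

Lemma normal_part_kernel_row n (a b : R -> vec) (da db Z : vec) s r : 0 < r ->
  (forall t, Rabs (t - s) < r -> gdet n (a t) (b t) < 0 /\ lightlike n (tang n (a t) (b t) Z)) ->
  is_vderiv n a s da -> is_vderiv n b s db ->
  tang_ca n (a s) (b s) Z * ip n (norm_part n (a s) (b s) Z) da
  + tang_cb n (a s) (b s) Z * ip n (norm_part n (a s) (b s) Z) db = 0.
Proof.
  intros hr hloc ha hb.
  assert (hdet : forall t, Rabs (t - s) < r -> gdet n (a t) (b t) <> 0)
    by (intros t ht; specialize (hloc t ht); lra).
  assert (hs : Rabs (s - s) < r) by (rewrite Rminus_diag, Rabs_R0; exact hr).
  destruct (tang_vderiv n a b da db Z s ha hb (hdet s hs)) as [dT hT].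
  assert (hN : is_vderiv n (fun t => norm_part n (a t) (b t) Z) s (fun i => - dT i)).
  { intros i hi. unfold norm_part.
    apply (derivable_pt_lim_ext (fun t => Z i - tang n (a t) (b t) Z i)); [reflexivity |].
    replace (- dT i) with (0 - dT i) by ring.
    apply derivable_pt_lim_minus; [apply derivable_pt_lim_const | exact (hT i hi)]. }
  apply (kernel_row n _ _ Z (fun i => - dT i)).
  - pose proof (ip_vderiv_loc_zero n _ _ s _ _ r hr (fun t ht => proj2 (proj2 (hloc t ht))) hT hT)
      as hTT.
    cbv beta in hTT. rewrite (ip_sym n _ dT) in hTT. rewrite ip_opp_l. lra.
  - apply (ip_vderiv_loc_zero n (fun t => norm_part n (a t) (b t) Z) a s _ _ r hr);
      [| exact hN | exact ha].
    intros t ht. apply norm_part_ip_a, hdet, ht.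
  - apply (ip_vderiv_loc_zero n (fun t => norm_part n (a t) (b t) Z) b s _ _ r hr);
      [| exact hN | exact hb].
    intros t ht. apply norm_part_ip_b, hdet, ht.
Qed.

Lemma tangent_derivative_kernel_row n (a b V : R -> vec) (da db dV Z : vec) s r : 0 < r ->
  (forall t, Rabs (t - s) < r ->
     ip n (V t) Z = 0 /\ ip n (V t) (a t) = 0 /\ ip n (V t) (b t) = 0) ->
  gdet n (a s) (b s) <> 0 ->
  is_vderiv n a s da -> is_vderiv n b s db -> is_vderiv n V s dV ->
  vzero n (norm_part n (a s) (b s) dV) ->
  tang_ca n (a s) (b s) Z * ip n (V s) da + tang_cb n (a s) (b s) Z * ip n (V s) db = 0.
Proof.
  intros hr hloc hdet ha hb hV htan.
  apply (kernel_row n _ _ Z dV).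
  - rewrite <- tang_ip_sym, <- tangent_ip by assumption.
    pose proof (ip_vderiv_loc_zero n V (fun _ => Z) s dV _ r hr
      (fun t ht => proj1 (hloc t ht)) hV (is_vderiv_const n Z s)) as hVZ.
    rewrite ip_zero_r in hVZ. lra.
  - exact (ip_vderiv_loc_zero n V a s dV da r hr (fun t ht => proj1 (proj2 (hloc t ht))) hV ha).
  - exact (ip_vderiv_loc_zero n V b s dV db r hr (fun t ht => proj2 (proj2 (hloc t ht))) hV hb).
Qed.

Section SurfaceWithNullDirection.

Variables (n : nat) (U : R -> R -> Prop) (fu fv fuu fuv fvv : R -> R -> vec) (Z : vec).
Hypotheses (hU : open2 U)
  (hfuu : forall u v, U u v -> pdu n fu u v (fuu u v))
  (hfuv : forall u v, U u v -> pdv n fu u v (fuv u v))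
  (hfvu : forall u v, U u v -> pdu n fv u v (fuv u v))
  (hfvv : forall u v, U u v -> pdv n fv u v (fvv u v))
  (htimelike : forall u v, U u v -> timelike_at n (fu u v) (fv u v))
  (hnull : forall u v, U u v -> lightlike n (tang n (fu u v) (fv u v) Z)).

Local Notation H u v := (meanH n (fu u v) (fv u v) (fuu u v) (fuv u v) (fvv u v)).

Lemma meanH_ip_Z_eq0 u v : U u v -> ip n (H u v) Z = 0.
Proof.
  intros huv. pose proof (htimelike u v huv) as hdet. unfold timelike_at in hdet.
  rewrite <- (ip_normal_norm_part n (fu u v) (fv u v)) by (apply meanH_ip_a || apply meanH_ip_b; lra).
  destruct (open2_slice_u U u v hU huv) as [ru [hru hslu]].
  destruct (open2_slice_v U u v hU huv) as [rv [hrv hslv]].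
  apply (meanH_ip_normal_eq0 n _ _ _ _ _ Z); [exact hdet | exact (hnull u v huv) | | | |].
  - apply norm_part_ip_a. lra.
  - apply norm_part_ip_b. lra.
  - apply (normal_part_kernel_row n (fun s => fu s v) (fun s => fv s v) _ _ Z u ru hru);
      [| exact (hfuu u v huv) | exact (hfvu u v huv)].
    intros s hs. split; [apply htimelike | apply hnull]; apply hslu, hs.
  - apply (normal_part_kernel_row n (fun t => fu u t) (fun t => fv u t) _ _ Z v rv hrv);
      [| exact (hfuv u v huv) | exact (hfvv u v huv)].
    intros t ht. split; [apply htimelike | apply hnull]; apply hslv, ht.
Qed.

Hypothesis hparallel : forall u v, U u v -> exists Hu Hv : vec,
  pdu n (fun s t => H s t) u v Hu /\ pdv n (fun s t => H s t) u v Hv /\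
  vzero n (norm_part n (fu u v) (fv u v) Hu) /\ vzero n (norm_part n (fu u v) (fv u v) Hv).

Lemma meanH_ip_self_eq0 u v : U u v -> ip n (H u v) (H u v) = 0.
Proof.
  intros huv. pose proof (htimelike u v huv) as hdet. unfold timelike_at in hdet.
  destruct (hparallel u v huv) as [Hu [Hv [hHu [hHv [tanHu tanHv]]]]].
  destruct (open2_slice_u U u v hU huv) as [ru [hru hslu]].
  destruct (open2_slice_v U u v hU huv) as [rv [hrv hslv]].
  assert (hperp : forall s t, U s t ->
    ip n (H s t) Z = 0 /\ ip n (H s t) (fu s t) = 0 /\ ip n (H s t) (fv s t) = 0).
  { intros s t hst. pose proof (htimelike s t hst) as hdet'. unfold timelike_at in hdet'.
    split; [| split]; [apply meanH_ip_Z_eq0 | apply meanH_ip_a | apply meanH_ip_b];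
      (exact hst || lra). }
  apply (meanH_ip_normal_eq0 n _ _ _ _ _ Z);
    [exact hdet | exact (hnull u v huv) | apply (hperp u v huv) | apply (hperp u v huv) | |].
  - apply (tangent_derivative_kernel_row n (fun s => fu s v) (fun s => fv s v) (fun s => H s v)
      _ _ Hu Z u ru hru); [| lra | exact (hfuu u v huv) | exact (hfvu u v huv) | exact hHu | exact tanHu].
    intros s hs. apply hperp, hslu, hs.
  - apply (tangent_derivative_kernel_row n (fun t => fu u t) (fun t => fv u t) (fun t => H u t)
      _ _ Hv Z v rv hrv); [| lra | exact (hfuv u v huv) | exact (hfvv u v huv) | exact hHv | exact tanHv].
    intros t ht. apply hperp, hslv, ht.
Qed.

End SurfaceWithNullDirection.

Theorem mainTheorem7
  (n : nat) (U : R -> R -> Prop) (f fu fv fuu fuv fvv : R -> R -> vec) (Z : vec)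
  (hU : open2 U)
  (hsmooth : smooth_map n U f)
  (hfu : forall u v, U u v -> pdu n f u v (fu u v))
  (hfv : forall u v, U u v -> pdv n f u v (fv u v))
  (hfuu : forall u v, U u v -> pdu n fu u v (fuu u v))
  (hfuv : forall u v, U u v -> pdv n fu u v (fuv u v))
  (hfvv : forall u v, U u v -> pdv n fv u v (fvv u v))
  (htimelike : forall u v, U u v -> timelike_at n (fu u v) (fv u v))
  (hnull : forall u v, U u v -> lightlike n (tang n (fu u v) (fv u v) Z))
  (hparallel : forall u v, U u v -> exists Hu Hv : vec,
      pdu n (fun s t => meanH n (fu s t) (fv s t) (fuu s t) (fuv s t) (fvv s t)) u v Hu /\
      pdv n (fun s t => meanH n (fu s t) (fv s t) (fuu s t) (fuv s t) (fvv s t)) u v Hv /\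
      vzero n (norm_part n (fu u v) (fv u v) Hu) /\
      vzero n (norm_part n (fu u v) (fv u v) Hv)) :
  forall u v, U u v ->
    vzero n (meanH n (fu u v) (fv u v) (fuu u v) (fuv u v) (fvv u v)).
Proof.
  assert (hfvu : forall u v, U u v -> pdu n fv u v (fuv u v)).
  { intros u v huv i hi.
    apply (smooth2_mixed_partials U (fun s t => f s t i) (fun s t => fu s t i) (fun s t => fv s t i));
      [exact hU | apply hsmooth, hi | exact huv | | | apply (hfuv u v huv i hi)].
    - intros s t hst. apply (hfu s t hst i hi).
    - intros s t hst. apply (hfv s t hst i hi). }
  intros u v huv. pose proof (htimelike u v huv) as hdet. unfold timelike_at in hdet.
  apply (timelike_normal_null_eq0 n (fu u v) (fv u v)); [exact hdet | | |].
  - apply meanH_ip_a. lra.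
  - apply meanH_ip_b. lra.
  - exact (meanH_ip_self_eq0 n U fu fv fuu fuv fvv Z hU hfuu hfuv hfvu hfvv htimelike hnull hparallel u v huv).
Qed.
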